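(* The following density statements hold, both with respect to the norm $\|\cdot\|$: \begin{itemize} \item the invertible elements of $B_0$ are dense in $B_0$; \item the selfadjoint (real valued) invertible elements of $B_0$ are dense in the set of all selfadjoint elements of $B_0$. \end{itemize}
   Context: Let $\mathbb{N} = \{1, 2, \dots\}$ and let $B = C_0(\mathbb{N})^+ = \{a \in \ell^\infty(\mathbb{N}) : \lim_{n\to\infty} a(n) \text{ exists}\}$, with the supremum norm $\|\cdot\|_\infty$ and pointwise operations. Let $\lambda(a) = \lim_{n\to\infty} a(n)$ for $a \in B$. Define \[ B_0 = \{a \in B : \lim_{n\to\infty} n[a(n) - \lambda(a)] \text{ exists}\}. \] For $a \in B_0$, set \[ \|a\|_\omega = \sup_{n \in \mathbb{N}} n|a(n) - \lambda(a)| \quad\text{and}\quad \|a\| = \|a\|_\infty + \|a\|_\omega . \] $B_0$ is a unital Banach *-algebra in $\|\cdot\|$, with pointwise operations and the involution $a^*(n) = \overline{a(n)}$. *)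

From Stdlib Require Import Reals.
From Coquelicot Require Import Coquelicot.
Open Scope R_scope.

(* A sequence a : N -> C, N = {1,2,...}, is represented by s : nat -> C
   with s k = a (k+1).  Thus the weight n in n[a(n) - lambda(a)] is INR (k+1). *)

Definition cseq_lim (s : nat -> C) (l : C) : Prop :=
  filterlim s eventually (locally l).

Definition lam (s : nat -> C) : C :=
  (real (Lim_seq (fun k => Re (s k))), real (Lim_seq (fun k => Im (s k)))).

Definition inB (s : nat -> C) : Prop := exists l : C, cseq_lim s l.

Definition inB0 (s : nat -> C) : Prop :=
  exists l : C, cseq_lim s l /\
    exists m : C, cseq_lim (fun k => Cmult (RtoC (INR (k + 1))) (Cminus (s k) l)) m.

Definition norm_sup (s : nat -> C) : R :=
  real (Lub_Rbar (fun x => exists k : nat, x = Cmod (s k))).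

Definition norm_omega (s : nat -> C) : R :=
  real (Lub_Rbar (fun x => exists k : nat, x = INR (k + 1) * Cmod (Cminus (s k) (lam s)))).

Definition normB0 (s : nat -> C) : R := norm_sup s + norm_omega s.

Definition invertibleB0 (s : nat -> C) : Prop :=
  exists t : nat -> C, inB0 t /\ (forall k, Cmult (s k) (t k) = RtoC 1) /\
                        (forall k, Cmult (t k) (s k) = RtoC 1).

Definition selfadjointB0 (s : nat -> C) : Prop := forall k, Cconj (s k) = s k.

From Stdlib Require Import Reals Lra Lia ClassicalDescription.
From Coquelicot Require Import Coquelicot.
Open Scope R_scope.

(* Shift a by a small real constant g > 0 chosen so that the limit l + g does
   not vanish, and shift the (possibly infinitely many) terms with
   a(n) + g = 0 further by g / n^2.  Both shifts are real and lie in B_0, and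
   the resulting b satisfies ||a - b|| <= 3g.  Since b vanishes nowhere and
   has nonzero limit, 1/b lies in B_0 again, so b is invertible. *)

Lemma cseq_lim_eps (s : nat -> C) (l : C) :
  cseq_lim s l <->
  forall eps, 0 < eps -> exists N, forall n, (N <= n)%nat -> Cmod (Cminus (s n) l) < eps.
Proof.
  unfold cseq_lim. rewrite (@filterlim_locally_ball_norm C_AbsRing); last apply eventually_filter.
  split.
  - intros H eps Heps. exact (H (mkposreal eps Heps)).
  - intros H eps. exact (H eps (cond_pos eps)).
Qed.

Lemma cseq_lim_ext (s t : nat -> C) (l : C) :
  (forall k, s k = t k) -> cseq_lim s l -> cseq_lim t l.
Proof. intros E H. eapply filterlim_ext; eassumption. Qed.

Lemma cseq_lim_const (c : C) : cseq_lim (fun _ => c) c.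
Proof. apply filterlim_const. Qed.

Lemma cseq_lim_plus (s t : nat -> C) (x y : C) :
  cseq_lim s x -> cseq_lim t y -> cseq_lim (fun k => Cplus (s k) (t k)) (Cplus x y).
Proof.
  intros Hs Ht. eapply filterlim_comp_2;
    [exact Hs | exact Ht | exact (@filterlim_plus C_AbsRing C_NormedModule x y)].
Qed.

Lemma cseq_lim_dominated (s : nat -> C) (l : C) (u : nat -> R) :
  (forall k, Cmod (Cminus (s k) l) <= u k) -> is_lim_seq u 0 -> cseq_lim s l.
Proof.
  intros Hsu Hu. apply cseq_lim_eps. intros eps Heps.
  destruct (proj2 (is_lim_seq_spec _ _) Hu (mkposreal eps Heps)) as [N HN].
  exists N. intros n Hn. specialize (HN n Hn). simpl in HN.
  apply Rle_lt_trans with (1 := Hsu n). rewrite Rminus_0_r in HN.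
  exact (Rle_lt_trans _ _ _ (Rle_abs _) HN).
Qed.

Lemma is_lim_seq_Cmod_cseq_lim (s : nat -> C) (l : C) :
  cseq_lim s l -> is_lim_seq (fun k => Cmod (Cminus (s k) l)) 0.
Proof.
  intros H. apply is_lim_seq_spec. intros eps.
  destruct (proj1 (cseq_lim_eps s l) H eps (cond_pos eps)) as [N HN].
  exists N. intros n Hn. rewrite Rminus_0_r, Rabs_pos_eq by apply Cmod_ge_0.
  exact (HN n Hn).
Qed.

Lemma cseq_lim_mult (s t : nat -> C) (x y : C) :
  cseq_lim s x -> cseq_lim t y -> cseq_lim (fun k => Cmult (s k) (t k)) (Cmult x y).
Proof.
  intros Hs Ht.
  set (e := fun k => Cmod (Cminus (s k) x)).
  set (f := fun k => Cmod (Cminus (t k) y)).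
  apply cseq_lim_dominated with (u := fun k => e k * (f k + Cmod y) + Cmod x * f k).
  - intros k.
    replace (Cminus (Cmult (s k) (t k)) (Cmult x y))
      with (Cplus (Cmult (Cminus (s k) x) (Cplus (Cminus (t k) y) y))
                  (Cmult x (Cminus (t k) y))) by (unfold Cminus; ring).
    eapply Rle_trans; [apply Cmod_triangle |].
    rewrite !Cmod_mult. apply Rplus_le_compat_r, Rmult_le_compat_l;
      [apply Cmod_ge_0 | apply Cmod_triangle].
  - apply is_lim_seq_Cmod_cseq_lim in Hs. apply is_lim_seq_Cmod_cseq_lim in Ht.
    replace (Finite 0) with (Finite (0 * (0 + Cmod y) + Cmod x * 0)) by (f_equal; ring).
    apply is_lim_seq_plus'.
    + apply is_lim_seq_mult'; [exact Hs |].
      exact (is_lim_seq_plus' _ _ _ _ Ht (is_lim_seq_const _)).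
    + exact (is_lim_seq_mult' _ _ _ _ (is_lim_seq_const _) Ht).
Qed.

Lemma cseq_lim_inv (s : nat -> C) (l : C) :
  cseq_lim s l -> l <> 0 -> cseq_lim (fun k => Cinv (s k)) (Cinv l).
Proof.
  rewrite !cseq_lim_eps. intros H Hl eps Heps.
  assert (Hp : 0 < Cmod l) by (apply Cmod_gt_0; exact Hl).
  set (p := Cmod l) in *.
  set (d := Rmin (p / 2) (eps * p * p / 2)).
  assert (Hepp : 0 < eps * p * p) by (repeat apply Rmult_lt_0_compat; lra).
  assert (Hd : 0 < d) by (apply Rmin_pos; lra).
  assert (Hd1 : d <= p / 2) by apply Rmin_l.
  assert (Hd2 : d <= eps * p * p / 2) by apply Rmin_r.
  destruct (H d Hd) as [N HN]. exists N. intros n Hn. specialize (HN n Hn).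
  assert (Hsn : p / 2 < Cmod (s n)).
  { assert (p <= Cmod (s n) + Cmod (Cminus (s n) l)).
    { unfold p. replace l with (Cplus (s n) (Copp (Cminus (s n) l))) at 1
        by (unfold Cminus; ring).
      rewrite <- (Cmod_opp (Cminus (s n) l)). apply Cmod_triangle. }
    lra. }
  assert (Hs0 : s n <> 0) by (intros E; rewrite E, Cmod_0 in Hsn; lra).
  replace (Cminus (Cinv (s n)) (Cinv l))
    with (Cmult (Copp (Cminus (s n) l)) (Cinv (Cmult (s n) l)))
    by (unfold Cminus; field; split; assumption).
  rewrite Cmod_mult, Cmod_opp, Cmod_inv, Cmod_mult
    by (apply Cmult_neq_0; assumption).
  fold p. set (m := Cmod (s n)) in *. set (e := Cmod (Cminus (s n) l)) in *.
  apply Rmult_lt_reg_r with (m * p); [nra |].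
  rewrite Rmult_assoc, Rinv_l by nra. nra.
Qed.

Lemma cseq_lim_harmonic (s : nat -> C) (M : R) :
  (forall k, Cmod (s k) <= M / INR (k + 1)) -> cseq_lim s 0.
Proof.
  intros H. apply cseq_lim_dominated with (u := fun k => Rabs M * / INR (k + 1)).
  - intros k. unfold Cminus. rewrite Copp_0, Cplus_0_r.
    apply Rle_trans with (1 := H k). apply Rmult_le_compat_r; [| apply Rle_abs].
    apply Rlt_le, Rinv_0_lt_compat, lt_0_INR. lia.
  - replace (Finite 0) with (Rbar_mult (Rabs M) 0) by (simpl; f_equal; ring).
    apply is_lim_seq_scal_l.
    apply (is_lim_seq_ext (fun k => / INR (S k))); [intros k; f_equal; f_equal; lia |].
    apply -> (is_lim_seq_incr_1 (fun k => / INR k)).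
    replace (Finite 0) with (Rbar_inv p_infty) by reflexivity.
    apply is_lim_seq_inv; [exact is_lim_seq_INR | discriminate].
Qed.

Lemma is_lim_seq_nonexpansive_comp (f : C -> R) (s : nat -> C) (l : C) :
  (forall z w, Rabs (f z - f w) <= Cmod (Cminus z w)) ->
  cseq_lim s l -> is_lim_seq (fun k => f (s k)) (f l).
Proof.
  intros Hf H. apply is_lim_seq_spec. intros eps.
  destruct (proj1 (cseq_lim_eps s l) H eps (cond_pos eps)) as [N HN].
  exists N. intros n Hn. exact (Rle_lt_trans _ _ _ (Hf _ _) (HN n Hn)).
Qed.

Lemma lam_cseq_lim (s : nat -> C) (l : C) : cseq_lim s l -> lam s = l.
Proof.
  intros H.
  assert (HRe : is_lim_seq (fun k => Re (s k)) (Re l)).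
  { apply is_lim_seq_nonexpansive_comp; [| exact H]. intros z w.
    replace (Re z - Re w) with (Re (Cminus z w)) by (destruct z, w; simpl; ring).
    apply re_le_Cmod. }
  assert (HIm : is_lim_seq (fun k => Im (s k)) (Im l)).
  { apply is_lim_seq_nonexpansive_comp; [| exact H]. intros z w.
    replace (Im z - Im w) with (Im (Cminus z w)) by (destruct z, w; simpl; ring).
    pose proof (Cmod2_alt (Cminus z w)). pose proof (Cmod_ge_0 (Cminus z w)).
    pose proof (pow2_abs (Im (Cminus z w))). pose proof (Rabs_pos (Im (Cminus z w))).
    nra. }
  unfold lam. rewrite (is_lim_seq_unique _ _ HRe), (is_lim_seq_unique _ _ HIm).
  destruct l. reflexivity.
Qed.

Lemma inB0_plus (a b : nat -> C) :
  inB0 a -> inB0 b -> inB0 (fun k => Cplus (a k) (b k)).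
Proof.
  intros [la [Ha [ma Hma]]] [lb [Hb [mb Hmb]]].
  exists (Cplus la lb). split; [exact (cseq_lim_plus _ _ _ _ Ha Hb) |].
  exists (Cplus ma mb).
  apply cseq_lim_ext with (2 := cseq_lim_plus _ _ _ _ Hma Hmb).
  intros k. unfold Cminus. ring.
Qed.

Lemma inB0_const (c : C) : inB0 (fun _ => c).
Proof.
  exists c. split; [apply cseq_lim_const |]. exists 0.
  apply cseq_lim_ext with (2 := cseq_lim_const 0).
  intros k. unfold Cminus. ring.
Qed.

Lemma one_le_INR_add1 (k : nat) : 1 <= INR (k + 1).
Proof. rewrite plus_INR. pose proof (pos_INR k). simpl. lra. Qed.

Lemma inB0_square_decay (d : nat -> C) (M : R) :
  (forall k, INR (k + 1) * Cmod (d k) <= M / INR (k + 1)) -> inB0 d.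
Proof.
  intros H. exists 0. split.
  - apply (cseq_lim_harmonic _ M). intros k.
    specialize (H k). pose proof (one_le_INR_add1 k). pose proof (Cmod_ge_0 (d k)). nra.
  - exists 0. apply (cseq_lim_harmonic _ M). intros k.
    unfold Cminus. rewrite Copp_0, Cplus_0_r, Cmod_mult, Cmod_R, Rabs_pos_eq.
    + apply H.
    + pose proof (one_le_INR_add1 k). lra.
Qed.

Lemma inB0_inv (b : nat -> C) :
  inB0 b -> lam b <> 0 -> (forall k, b k <> 0) -> inB0 (fun k => Cinv (b k)).
Proof.
  intros [l [Hb [m Hm]]] Hl Hb0. rewrite (lam_cseq_lim _ _ Hb) in Hl.
  exists (Cinv l). split; [exact (cseq_lim_inv _ _ Hb Hl) |].
  (* n (1/b(n) - 1/l) = - n (b(n) - l) / (b(n) l) *)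
  exists (Cmult (Cmult m (Cinv (Cmult l l))) (RtoC (-1))).
  apply cseq_lim_ext with (s := fun k =>
    Cmult (Cmult (Cmult (RtoC (INR (k + 1))) (Cminus (b k) l))
                 (Cinv (Cmult (b k) l))) (RtoC (-1))).
  - intros k. unfold Cminus. field. split; [exact Hl | exact (Hb0 k)].
  - apply cseq_lim_mult; [| apply cseq_lim_const].
    apply cseq_lim_mult; [exact Hm |].
    apply cseq_lim_inv; [| apply Cmult_neq_0; exact Hl].
    exact (cseq_lim_mult _ _ _ _ Hb (cseq_lim_const l)).
Qed.

Lemma invertibleB0_of_nonvanishing (b : nat -> C) :
  inB0 b -> lam b <> 0 -> (forall k, b k <> 0) -> invertibleB0 b.
Proof.
  intros HB Hl Hb0. exists (fun k => Cinv (b k)).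
  split; [exact (inB0_inv b HB Hl Hb0) |].
  split; intros k; [apply Cinv_r | apply Cinv_l]; apply Hb0.
Qed.

Lemma Lub_Rbar_seq_le (f : nat -> R) (M : R) :
  (forall k, f k <= M) -> real (Lub_Rbar (fun x => exists k : nat, x = f k)) <= M.
Proof.
  intros H. destruct (Lub_Rbar_correct (fun x => exists k : nat, x = f k)) as [Hub Hlub].
  assert (HM : Rbar_le (Lub_Rbar (fun x => exists k : nat, x = f k)) M)
    by (apply Hlub; intros x [k ->]; apply H).
  specialize (Hub (f 0%nat) (ex_intro _ 0%nat eq_refl)).
  destruct (Lub_Rbar _); simpl in *; tauto.
Qed.

Lemma norm_sup_le (s : nat -> C) (M : R) :
  (forall k, Cmod (s k) <= M) -> norm_sup s <= M.
Proof.
  exact (Lub_Rbar_seq_le (fun k => Cmod (s k)) M).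
Qed.

Lemma norm_omega_le (s : nat -> C) (l : C) (M : R) :
  cseq_lim s l -> (forall k, INR (k + 1) * Cmod (Cminus (s k) l) <= M) ->
  norm_omega s <= M.
Proof.
  intros Hs H. unfold norm_omega. rewrite (lam_cseq_lim _ _ Hs).
  exact (Lub_Rbar_seq_le _ M H).
Qed.

Lemma exists_shift_nonzero (l : C) (eps : R) :
  0 < eps -> exists g, 0 < g <= eps /\ Cplus l (RtoC g) <> 0.
Proof.
  intros Heps.
  destruct (excluded_middle_informative (Cplus l (RtoC eps) = 0)) as [E | E].
  - exists (eps / 2). split; [lra |]. intros E2.
    apply (f_equal fst) in E. apply (f_equal fst) in E2. simpl in E, E2. lra.
  - exists eps. split; [lra | exact E].
Qed.

Lemma Rdiv_INR_add1_le (x : R) (k : nat) : 0 <= x -> x / INR (k + 1) <= x.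
Proof.
  intros Hx. pose proof (one_le_INR_add1 k).
  unfold Rdiv. rewrite <- (Rmult_1_r x) at 2. apply Rmult_le_compat_l; [exact Hx |].
  rewrite <- Rinv_1. apply Rinv_le_contravar; lra.
Qed.

Lemma Cconj_RtoC (x : R) : Cconj (RtoC x) = RtoC x.
Proof. unfold Cconj, RtoC. simpl. f_equal. ring. Qed.

Section Perturbation.

Variables (a : nat -> C) (g : R).
Hypothesis g_pos : 0 < g.

Definition zero_repair (k : nat) : R :=
  if excluded_middle_informative (Cplus (a k) (RtoC g) = 0)
  then g / (INR (k + 1) * INR (k + 1)) else 0.

Definition perturb (k : nat) : C :=
  Cplus (a k) (Cplus (RtoC g) (RtoC (zero_repair k))).

Lemma zero_repair_bounds (k : nat) :
  0 <= zero_repair k /\ INR (k + 1) * zero_repair k <= g / INR (k + 1).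
Proof.
  pose proof (one_le_INR_add1 k).
  unfold zero_repair. destruct excluded_middle_informative.
  - split.
    + apply Rlt_le, Rdiv_lt_0_compat; nra.
    + right. field. lra.
  - split; [lra |]. rewrite Rmult_0_r. apply Rlt_le, Rdiv_lt_0_compat; lra.
Qed.

Lemma zero_repair_le_harmonic (k : nat) : zero_repair k <= g / INR (k + 1).
Proof.
  destruct (zero_repair_bounds k) as [H0 H1]. pose proof (one_le_INR_add1 k). nra.
Qed.

Lemma cseq_lim_zero_repair : cseq_lim (fun k => RtoC (zero_repair k)) 0.
Proof.
  apply (cseq_lim_harmonic _ g). intros k.
  rewrite Cmod_R, Rabs_pos_eq by apply zero_repair_bounds.
  apply zero_repair_le_harmonic.
Qed.

Lemma perturb_neq0 (k : nat) : perturb k <> 0.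
Proof.
  unfold perturb, zero_repair.
  destruct excluded_middle_informative as [E | E]; intros Hb.
  - pose proof (one_le_INR_add1 k).
    assert (Hpos : 0 < g / (INR (k + 1) * INR (k + 1))) by (apply Rdiv_lt_0_compat; nra).
    rewrite Cplus_assoc, E, Cplus_0_l in Hb.
    apply (f_equal fst) in Hb. simpl in Hb. lra.
  - apply E. rewrite <- Hb. ring.
Qed.

Lemma inB0_perturb : inB0 a -> inB0 perturb.
Proof.
  intros Ha. apply (inB0_plus _ _ Ha), (inB0_plus _ _ (inB0_const _)).
  apply (inB0_square_decay _ g). intros k.
  rewrite Cmod_R, Rabs_pos_eq by apply zero_repair_bounds.
  apply zero_repair_bounds.
Qed.

Lemma cseq_lim_perturb (l : C) :
  cseq_lim a l -> cseq_lim perturb (Cplus l (RtoC g)).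
Proof.
  intros Ha. replace (Cplus l (RtoC g)) with (Cplus l (Cplus (RtoC g) 0)) by ring.
  exact (cseq_lim_plus _ _ _ _ Ha
    (cseq_lim_plus _ _ _ _ (cseq_lim_const _) cseq_lim_zero_repair)).
Qed.

Lemma selfadjointB0_perturb : selfadjointB0 a -> selfadjointB0 perturb.
Proof.
  intros Ha k. unfold perturb. rewrite !Cplus_conj, Ha, !Cconj_RtoC. reflexivity.
Qed.

Lemma normB0_sub_perturb_le : normB0 (fun k => Cminus (a k) (perturb k)) <= 3 * g.
Proof.
  set (e := fun k => Cminus (a k) (perturb k)).
  assert (Ee : forall k, e k = Copp (Cplus (RtoC g) (RtoC (zero_repair k))))
    by (intros k; unfold e, perturb, Cminus; ring).
  assert (Hsup : norm_sup e <= 2 * g).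
  { apply norm_sup_le. intros k. rewrite Ee, Cmod_opp, <- RtoC_plus, Cmod_R.
    destruct (zero_repair_bounds k) as [H0 _].
    pose proof (zero_repair_le_harmonic k). pose proof (Rdiv_INR_add1_le g k).
    rewrite Rabs_pos_eq; lra. }
  assert (Homega : norm_omega e <= g).
  { apply (norm_omega_le _ (Copp (RtoC g))).
    - pose proof (cseq_lim_mult _ _ _ _ (cseq_lim_const (RtoC (-1)))
        (cseq_lim_plus _ _ _ _ (cseq_lim_const (RtoC g)) cseq_lim_zero_repair)) as Hlim.
      replace (Cmult (RtoC (-1)) (Cplus (RtoC g) 0)) with (Copp (RtoC g)) in Hlim by ring.
      apply cseq_lim_ext with (2 := Hlim). intros k. rewrite Ee. ring.
    - intros k.
      replace (Cminus (e k) (Copp (RtoC g))) with (Copp (RtoC (zero_repair k)))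
        by (rewrite Ee; unfold Cminus; ring).
      destruct (zero_repair_bounds k) as [H0 H1].
      rewrite Cmod_opp, Cmod_R, Rabs_pos_eq by exact H0.
      pose proof (Rdiv_INR_add1_le g k). lra. }
  unfold normB0. fold e. lra.
Qed.

End Perturbation.

Lemma exists_invertible_perturb (a : nat -> C) (eps : R) : inB0 a -> 0 < eps ->
  exists g, inB0 (perturb a g) /\ invertibleB0 (perturb a g) /\
    normB0 (fun k => Cminus (a k) (perturb a g k)) < eps.
Proof.
  intros Ha Heps. pose proof Ha as [l [Hl _]].
  destruct (exists_shift_nonzero l (eps / 4)) as [g [Hg Hlg]]; [lra |].
  assert (HB : inB0 (perturb a g)) by (apply inB0_perturb; [lra | exact Ha]).
  exists g. split; [exact HB |]. split.
  - apply invertibleB0_of_nonvanishing; [exact HB | |].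
    + rewrite (lam_cseq_lim _ _ (cseq_lim_perturb a g ltac:(lra) l Hl)). exact Hlg.
    + apply perturb_neq0. lra.
  - pose proof (normB0_sub_perturb_le a g ltac:(lra)). lra.
Qed.

Theorem proposition4p11 :
  (forall a : nat -> C, inB0 a -> forall eps : R, 0 < eps ->
     exists b : nat -> C, inB0 b /\ invertibleB0 b /\
       normB0 (fun k => Cminus (a k) (b k)) < eps) /\
  (forall a : nat -> C, inB0 a -> selfadjointB0 a -> forall eps : R, 0 < eps ->
     exists b : nat -> C, inB0 b /\ selfadjointB0 b /\ invertibleB0 b /\
       normB0 (fun k => Cminus (a k) (b k)) < eps).
Proof.
  split.
  - intros a Ha eps Heps.
    destruct (exists_invertible_perturb a eps Ha Heps) as [g Hb].
    exists (perturb a g). exact Hb.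
  - intros a Ha Hsa eps Heps.
    destruct (exists_invertible_perturb a eps Ha Heps) as [g [HB [Hinv Hn]]].
    exists (perturb a g).
    split; [exact HB | split; [exact (selfadjointB0_perturb a g Hsa) | split; assumption]].
Qed.
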